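(* Let $\mathbb{F}$ be a field of characteristic $2$, $\mathbb{F}'\subseteq\mathbb{F}$ a subfield, and $h$ a positive integer. Let $S\subseteq\mathbb{F}$ be a set with $|S|=n$ that is $2h$-wise independent over $\mathbb{F}'$. Let $r$ be a positive integer such that $\ell=\frac{n}{r+1}$ is an integer, and index the elements of $S$ as $S=\{\alpha_{i,s}\}_{i\in[\ell],s\in[r+1]}$. Then for every ${\bf e}\in[r+1]^\ell$ the multi-set $T(S,{\bf e})=\{\alpha_{i,s}+\alpha_{i,{\bf e}(i)}\}_{i\in[\ell],\,s\in[r+1]\setminus\{{\bf e}(i)\}}$ is $h$-wise independent over $\mathbb{F}'$.
   Context: A multi-set $T\subseteq\mathbb{F}$ is $t$-wise independent over a subfield $\mathbb{F}'$ if every sub-multi-set of $T$ of size at most $t$ is linearly independent over $\mathbb{F}'$. *)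

From mathcomp Require Import all_boot all_order all_algebra.
Set Implicit Arguments. Unset Strict Implicit. Unset Printing Implicit Defensive.
Import GRing.Theory.
Local Open Scope ring_scope.

(* Repeated values at different indices count with multiplicity. *)
Definition lin_indep_over (F : fieldType) (K : {pred F}) (I : finType)
    (x : I -> F) (A : {set I}) : Prop :=
  forall c : I -> F, (forall i, i \in A -> c i \in K) ->
    \sum_(i in A) c i * x i = 0 -> forall i, i \in A -> c i = 0.

Definition twise_indep (F : fieldType) (K : {pred F}) (I : finType)
    (t : nat) (x : I -> F) (D : {set I}) : Prop :=
  forall A : {set I}, A \subset D -> (#|A| <= t)%N -> lin_indep_over K x A.

Definition Tfam (F : fieldType) (l r : nat) (alpha : 'I_l -> 'I_r.+1 -> F)
    (e : 'I_l -> 'I_r.+1) : 'I_l * 'I_r.+1 -> F :=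
  fun p => alpha p.1 p.2 + alpha p.1 (e p.1).

Definition Tdom (l r : nat) (e : 'I_l -> 'I_r.+1) : {set 'I_l * 'I_r.+1} :=
  [set p | p.2 != e p.1].

From mathcomp Require Import all_boot all_order all_algebra.
Local Open Scope ring_scope.
Import GRing.Theory.

(* A K-linear relation among the elements [x p + x (f p)], p in A, is a
   K-linear relation among the at most 2|A| elements [x q], q in A ∪ f(A),
   whose coefficient at p in A is unchanged as long as f(A) avoids A.  For
   T(S,e) take f (i,s) := (i, e i); the pivots (i, e i) lie outside the index
   set of T(S,e), so 2h-wise independence of S kills every coefficient. *)

Section PivotShift.

Variables (F : fieldType) (I : finType).
Implicit Types (A : {set I}) (f : I -> I) (c : I -> F).

Definition pivot_coef A f c (q : I) : F :=
  if q \in A then c q else \sum_(p in A | f p == q) c p.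

Lemma pivot_coef_in A f c q : q \in A -> pivot_coef A f c q = c q.
Proof. by rewrite /pivot_coef => ->. Qed.

Lemma rpred_pivot_coef (K : addrClosed F) A f c q :
  (forall p, p \in A -> c p \in K) -> pivot_coef A f c q \in K.
Proof.
move=> cK; rewrite /pivot_coef; case: ifP => [/cK //|_].
by apply: rpred_sum => p /andP[/cK].
Qed.

Lemma sum_pivot_coef A f c (x : I -> F) : [disjoint A & f @: A] ->
  \sum_(q in A :|: f @: A) pivot_coef A f c q * x q =
  \sum_(p in A) c p * (x p + x (f p)).
Proof.
move=> disjA; rewrite (eq_bigl [predU A & f @: A]) => [|q]; last by rewrite !inE.
rewrite bigU //= (eq_bigr (fun p => c p * x p)) => [|p pA]; last first.
  by rewrite pivot_coef_in.
have -> : \sum_(q in f @: A) pivot_coef A f c q * x q =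
          \sum_(q in f @: A) \sum_(p in A | f p == q) c p * x (f p).
  apply: eq_bigr => q qfA; rewrite /pivot_coef (disjointFl disjA qfA).
  by rewrite mulr_suml; apply: eq_bigr => p /andP[_ /eqP ->].
rewrite -(partition_big f (mem (f @: A))) => [|p pA]; last exact: imset_f.
by rewrite -big_split; apply: eq_bigr => p _; rewrite mulrDr.
Qed.

Lemma card_setU_imset A f : (#|A :|: f @: A| <= 2 * #|A|)%N.
Proof.
rewrite mul2n -addnn; apply: leq_trans (leq_card_setU _ _) _.
by rewrite leq_add2l leq_imset_card.
Qed.

Lemma twise_indep_pivot_shift (K : addrClosed F) t (x : I -> F) f
    (D : {set I}) :
  (forall p, p \in D -> f p \notin D) -> twise_indep K (2 * t) x setT ->
  twise_indep K t (fun p => x p + x (f p)) D.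
Proof.
move=> fD indep A AD At c cK rel p pA.
have disjA : [disjoint A & f @: A].
  rewrite -setI_eq0; apply/eqP/setP => q; rewrite !inE.
  apply/andP => -[qA /imsetP[p' p'A qE]].
  by move/fD: (subsetP AD _ p'A); rewrite -qE (subsetP AD _ qA).
have cardAfA : (#|A :|: f @: A| <= 2 * t)%N.
  by apply: leq_trans (card_setU_imset A f) _; rewrite leq_mul2l At orbT.
have := indep _ (subsetT _) cardAfA (pivot_coef A f c).
rewrite sum_pivot_coef // rel => /(_ (fun q _ => rpred_pivot_coef _ _ _ _ q cK)).
by move=> /(_ erefl p); rewrite inE pA pivot_coef_in //; apply.
Qed.

End PivotShift.

Theorem lemma11 (F : fieldType) (K : divringClosed F) (h l r : nat)
    (alpha : 'I_l -> 'I_r.+1 -> F) :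
  2%N \in [pchar F] -> (0 < h)%N -> (0 < r)%N ->
  injective (fun p : 'I_l * 'I_r.+1 => alpha p.1 p.2) ->
  twise_indep K (2 * h) (fun p : 'I_l * 'I_r.+1 => alpha p.1 p.2) setT ->
  forall e : 'I_l -> 'I_r.+1,
    twise_indep K h (Tfam alpha e) (Tdom e).
Proof.
move=> _ _ _ _ indep e.
pose pivot (p : 'I_l * 'I_r.+1) := (p.1, e p.1).
apply: (@twise_indep_pivot_shift _ _ K h _ pivot _ _ indep) => p _.
by rewrite inE /= eqxx.
Qed.
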